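(* Let $\Delta$ be a mesh and let $A:\Delta\to\mathbb{R}$ be 1-increasing. Then: (a) $A$ is grounded if and only if $A^{\mathrm{BL}}$ is grounded; (b) $1$ is a neutral element for $A$ if and only if $1$ is a neutral element for $A^{\mathrm{BL}}$; (c) $A$ is 2-increasing if and only if $A^{\mathrm{BL}}$ is 2-increasing; (d) $A$ is quasi-2-increasing if and only if $A^{\mathrm{BL}}$ is quasi-2-increasing; (e) $A$ is a discrete copula if and only if $A^{\mathrm{BL}}$ is a copula; (f) $A$ is a discrete quasi-copula if and only if $A^{\mathrm{BL}}$ is a quasi-copula.
   Context: A mesh is $\Delta=\delta_x\times\delta_y$ with $\delta_x=\{0=x_0<\dots<x_p=1\}$, $\delta_y=\{0=y_0<\dots<y_q=1\}$. A function is 1-increasing if it is nondecreasing in each variable. $A^{\mathrm{BL}}:[0,1]^2\to\mathbb{R}$ is the function which on each cell $[x_{i-1},x_i]\times[y_{j-1},y_j]$ equals the bilinear interpolation (the unique function taking the given corner values and affine in each variable separately) of the values of $A$ at the cell's corners. Let $\mathbb{D}$ denote either $[0,1]^2$ or a mesh $\Delta$, and let $A:\mathbb{D}\to\mathbb{R}$. For a rectangle $[s_1,s_2]\times[t_1,t_2]$ with corners in $\mathbb{D}$, $V_A=A(s_1,t_1)+A(s_2,t_2)-A(s_2,t_1)-A(s_1,t_2)$. $A$ is grounded if $A(x,0)=0=A(0,y)$ whenever these points are in $\mathbb{D}$; $1$ is a neutral element if $A(x,1)=x$ and $A(1,y)=y$ whenever these points are in $\mathbb{D}$; $A$ is 2-increasing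 if $V_A(R)\ge0$ for every rectangle with corners in $\mathbb{D}$; $A$ is quasi-2-increasing if $V_A(R)\ge0$ for every rectangle with corners in $\mathbb{D}$ at least one of whose sides lies on the boundary of $[0,1]^2$. On $[0,1]^2$, a grounded, 2-increasing function with neutral element 1 is a copula and a grounded, quasi-2-increasing function with neutral element 1 is a quasi-copula; on a mesh $\Delta$ these are called a discrete copula and a discrete quasi-copula, respectively. *)

From Stdlib Require Import Reals Lra.
Open Scope R_scope.

Definition is_partition (x : nat -> R) (p : nat) : Prop :=
  (1 <= p)%nat /\ x 0%nat = 0 /\ x p = 1 /\
  (forall i : nat, (i < p)%nat -> x i < x (S i)).

(** A function on the mesh Delta = {x_0..x_p} x {y_0..y_q} is given by its
    values on grid indices: A i j is the value at (x i, y j), i <= p, j <= q. *)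

Definition VolR (F : R -> R -> R) (s1 s2 t1 t2 : R) : R :=
  F s1 t1 + F s2 t2 - F s2 t1 - F s1 t2.

Definition VolM (A : nat -> nat -> R) (i1 i2 j1 j2 : nat) : R :=
  A i1 j1 + A i2 j2 - A i2 j1 - A i1 j2.

Definition one_increasing_mesh (p q : nat) (A : nat -> nat -> R) : Prop :=
  (forall i i' j, (i <= i')%nat -> (i' <= p)%nat -> (j <= q)%nat -> A i j <= A i' j) /\
  (forall i j j', (i <= p)%nat -> (j <= j')%nat -> (j' <= q)%nat -> A i j <= A i j').

Definition grounded_mesh (p q : nat) (A : nat -> nat -> R) : Prop :=
  (forall i, (i <= p)%nat -> A i 0%nat = 0) /\
  (forall j, (j <= q)%nat -> A 0%nat j = 0).

Definition neutral_mesh (x y : nat -> R) (p q : nat) (A : nat -> nat -> R) : Prop :=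
  (forall i, (i <= p)%nat -> A i q = x i) /\
  (forall j, (j <= q)%nat -> A p j = y j).

Definition two_increasing_mesh (p q : nat) (A : nat -> nat -> R) : Prop :=
  forall i1 i2 j1 j2, (i1 <= i2)%nat -> (i2 <= p)%nat ->
    (j1 <= j2)%nat -> (j2 <= q)%nat -> 0 <= VolM A i1 i2 j1 j2.

Definition quasi_two_increasing_mesh (p q : nat) (A : nat -> nat -> R) : Prop :=
  forall i1 i2 j1 j2, (i1 <= i2)%nat -> (i2 <= p)%nat ->
    (j1 <= j2)%nat -> (j2 <= q)%nat ->
    (i1 = 0%nat \/ i2 = p \/ j1 = 0%nat \/ j2 = q) ->
    0 <= VolM A i1 i2 j1 j2.

Definition discrete_copula (x y : nat -> R) (p q : nat) (A : nat -> nat -> R) : Prop :=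
  grounded_mesh p q A /\ two_increasing_mesh p q A /\ neutral_mesh x y p q A.

Definition discrete_quasi_copula (x y : nat -> R) (p q : nat) (A : nat -> nat -> R) : Prop :=
  grounded_mesh p q A /\ quasi_two_increasing_mesh p q A /\ neutral_mesh x y p q A.

Definition in01 (t : R) : Prop := 0 <= t <= 1.

Definition grounded_sq (F : R -> R -> R) : Prop :=
  forall t, in01 t -> F t 0 = 0 /\ F 0 t = 0.

Definition neutral_sq (F : R -> R -> R) : Prop :=
  forall t, in01 t -> F t 1 = t /\ F 1 t = t.

Definition two_increasing_sq (F : R -> R -> R) : Prop :=
  forall s1 s2 t1 t2, 0 <= s1 -> s1 <= s2 -> s2 <= 1 ->
    0 <= t1 -> t1 <= t2 -> t2 <= 1 -> 0 <= VolR F s1 s2 t1 t2.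

Definition quasi_two_increasing_sq (F : R -> R -> R) : Prop :=
  forall s1 s2 t1 t2, 0 <= s1 -> s1 <= s2 -> s2 <= 1 ->
    0 <= t1 -> t1 <= t2 -> t2 <= 1 ->
    (s1 = 0 \/ s2 = 1 \/ t1 = 0 \/ t2 = 1) -> 0 <= VolR F s1 s2 t1 t2.

Definition copula (F : R -> R -> R) : Prop :=
  grounded_sq F /\ two_increasing_sq F /\ neutral_sq F.

Definition quasi_copula (F : R -> R -> R) : Prop :=
  grounded_sq F /\ quasi_two_increasing_sq F /\ neutral_sq F.

Fixpoint find_cell (x : nat -> R) (u : R) (i n : nat) : nat :=
  match n with
  | O => i
  | S n' => if Rle_dec u (x i) then i else find_cell x u (S i) n'
  end.

(** index k in 1..p of a cell [x (k-1), x k] containing u (for u in [0,1]):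
    the least k in 1..p with u <= x k (and p if there is none). *)
Definition cell (x : nat -> R) (p : nat) (u : R) : nat :=
  find_cell x u 1 (p - 1).

(** A^BL: on the cell [x(i-1),x i] x [y(j-1),y j] the bilinear interpolation
    of the four corner values. (Values outside [0,1]^2 are irrelevant.) *)
Definition BL (x y : nat -> R) (p q : nat) (A : nat -> nat -> R) (u v : R) : R :=
  let i := cell x p u in
  let j := cell y q v in
  let a := (u - x (i - 1)%nat) / (x i - x (i - 1)%nat) in
  let b := (v - y (j - 1)%nat) / (y j - y (j - 1)%nat) in
  (1 - a) * (1 - b) * A (i - 1)%nat (j - 1)%nat
  + a * (1 - b) * A i (j - 1)%nat
  + (1 - a) * b * A (i - 1)%nat j
  + a * b * A i j.

(** Along one axis, A^BL is the piecewise-linear interpolation [interp] of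
    its values along the partition, and A^BL is obtained by interpolating
    first in one variable and then in the other.

    The volume of A^BL over [s1,s2]x[t1,t2] is the increment between t1
    and t2 of the y-interpolation of j |-> (x-interpolation of A(.,j)
    between s1 and s2); it is therefore nonnegative as soon as each
    "vertical step" i |-> A(i,j+1) - A(i,j) has nondecreasing interpolation
    from s1 to s2 ([BL_volume_nonneg]).  This criterion yields the 2-increasing
    property and, with s1 = 0 or s2 = 1, the quasi-2-increasing property on
    two boundary sides; the other two sides follow by exchanging the roles
    of the variables ([VolR_BL_transpose]).  The converse implications hold
    because A^BL coincides with A on the mesh ([BL_at_mesh]).  Groundedness
    and the neutral element transfer since the interpolation of constant
    (resp. identity) boundary data is constant (resp. the identity). *)

From Stdlib Require Import Reals Lra Lia Arith.
Open Scope R_scope.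

Lemma find_cell_spec (x : nat -> R) (u : R) (n i : nat) :
  (i <= find_cell x u i n <= i + n)%nat /\
  ((find_cell x u i n < i + n)%nat -> u <= x (find_cell x u i n)) /\
  (forall m, (i <= m < find_cell x u i n)%nat -> x m < u).
Proof.
  revert i; induction n as [|n IH]; intros i; simpl.
  - repeat split; intros; lia.
  - destruct (Rle_dec u (x i)) as [Hle|Hgt].
    + repeat split; auto; intros; lia.
    + destruct (IH (S i)) as [Hrange [Hnode Hbelow]].
      repeat split; try lia.
      * intros; apply Hnode; lia.
      * intros m Hm; destruct (Nat.eq_dec m i) as [->|Hmi].
        -- now apply Rnot_le_lt.
        -- apply Hbelow; lia.
Qed.

Definition weight (x : nat -> R) (p : nat) (u : R) : R :=
  (u - x (cell x p u - 1)%nat) / (x (cell x p u) - x (cell x p u - 1)%nat).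

Definition interp (x : nat -> R) (p : nat) (f : nat -> R) (u : R) : R :=
  (1 - weight x p u) * f (cell x p u - 1)%nat + weight x p u * f (cell x p u).

Lemma interp_const x p c u : interp x p (fun _ => c) u = c.
Proof. unfold interp; ring. Qed.

Section Partition.

Variables (x : nat -> R) (p : nat).
Hypothesis Hx : is_partition x p.

Lemma partition_lt i j : (i < j)%nat -> (j <= p)%nat -> x i < x j.
Proof.
  destruct Hx as [_ [_ [_ Hstep]]].
  induction j as [|j IH]; intros Hij Hj; [lia|].
  destruct (Nat.eq_dec i j) as [->|Hne]; [apply Hstep; lia|].
  apply Rlt_trans with (x j); [apply IH; lia | apply Hstep; lia].
Qed.

Lemma partition_le i j : (i <= j)%nat -> (j <= p)%nat -> x i <= x j.
Proof.
  intros Hij Hj; destruct (Nat.eq_dec i j) as [->|Hne]; [lra|].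
  apply Rlt_le, partition_lt; lia.
Qed.

Lemma partition_in01 i : (i <= p)%nat -> in01 (x i).
Proof.
  destruct Hx as [_ [H0 [H1 _]]]; intros Hi.
  unfold in01; rewrite <- H0, <- H1; split; apply partition_le; lia.
Qed.

Lemma cell_spec u : in01 u ->
  (1 <= cell x p u <= p)%nat /\
  x (cell x p u - 1)%nat <= u <= x (cell x p u) /\
  x (cell x p u - 1)%nat < x (cell x p u) /\
  ((2 <= cell x p u)%nat -> x (cell x p u - 1)%nat < u).
Proof.
  intros Hu; pose proof Hx as [Hp [H0 [H1 _]]]; unfold cell.
  destruct (find_cell_spec x u (p - 1) 1) as [Hrange [Hnode Hbelow]].
  set (c := find_cell x u 1 (p - 1)) in *.
  split; [lia|]; split; [split|split].
  - destruct (Nat.eq_dec c 1) as [->|Hc]; [simpl; red in Hu; lra|].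
    apply Rlt_le, Hbelow; lia.
  - destruct (Nat.lt_ge_cases c (1 + (p - 1))); [apply Hnode; lia|].
    replace c with p by lia; red in Hu; lra.
  - apply partition_lt; lia.
  - intros; apply Hbelow; lia.
Qed.

Lemma cell_mono u u' : in01 u -> in01 u' -> u <= u' -> (cell x p u <= cell x p u')%nat.
Proof.
  intros Hu Hu' Huu'.
  destruct (cell_spec u Hu) as [Hc [_ [_ Hleft]]].
  destruct (cell_spec u' Hu') as [Hc' [[_ Hright'] _]].
  destruct (Nat.le_gt_cases (cell x p u) (cell x p u')) as [|Hgt]; auto.
  assert (x (cell x p u') <= x (cell x p u - 1)%nat) by (apply partition_le; lia).
  specialize (Hleft ltac:(lia)); lra.
Qed.

Lemma cell_at_mesh i : (1 <= i <= p)%nat -> cell x p (x i) = i.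
Proof.
  intros Hi; unfold cell.
  destruct (find_cell_spec x (x i) (p - 1) 1) as [Hrange [Hnode Hbelow]].
  set (c := find_cell x (x i) 1 (p - 1)) in *.
  destruct (lt_eq_lt_dec c i) as [[Hlt|Heq]|Hgt]; auto.
  - assert (x i <= x c) by (apply Hnode; lia).
    assert (x c < x i) by (apply partition_lt; lia); lra.
  - assert (x i < x i) by (apply Hbelow; lia); lra.
Qed.

Lemma cell_at_0 : cell x p 0 = 1%nat.
Proof.
  pose proof Hx as [Hp [H0 _]]; unfold cell.
  destruct (find_cell_spec x 0 (p - 1) 1) as [Hrange [_ Hbelow]].
  destruct (Nat.eq_dec (find_cell x 0 1 (p - 1)) 1) as [|Hne]; auto.
  assert (x 1%nat < 0) by (apply Hbelow; lia).
  assert (x 0%nat < x 1%nat) by (apply partition_lt; lia); lra.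
Qed.

Lemma weight_bounds u : in01 u -> 0 <= weight x p u <= 1.
Proof.
  intros Hu; destruct (cell_spec u Hu) as [_ [[Hl Hr] [Hcell _]]]; unfold weight.
  split.
  - apply Rmult_le_pos; [lra | left; apply Rinv_0_lt_compat; lra].
  - apply Rmult_le_reg_r with (x (cell x p u) - x (cell x p u - 1)%nat); [lra|].
    unfold Rdiv; rewrite Rmult_assoc, Rinv_l; lra.
Qed.

Lemma interp_ext f g u : in01 u ->
  (forall i, (i <= p)%nat -> f i = g i) -> interp x p f u = interp x p g u.
Proof.
  intros Hu Hfg; destruct (cell_spec u Hu) as [Hc _].
  unfold interp; rewrite !Hfg by lia; reflexivity.
Qed.

Lemma interp_id u : in01 u -> interp x p x u = u.
Proof.
  intros Hu; destruct (cell_spec u Hu) as [_ [_ [Hcell _]]].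
  unfold interp, weight; field; lra.
Qed.

Lemma interp_at_mesh f i : (i <= p)%nat -> interp x p f (x i) = f i.
Proof.
  pose proof Hx as [_ [H0 _]]; intros Hi; unfold interp, weight.
  destruct (Nat.eq_dec i 0) as [->|Hi0].
  - rewrite H0, cell_at_0; simpl; rewrite H0; unfold Rdiv; ring.
  - rewrite cell_at_mesh by lia.
    assert (x (i - 1)%nat < x i) by (apply partition_lt; lia).
    replace ((x i - x (i - 1)%nat) / (x i - x (i - 1)%nat)) with 1 by (field; lra).
    ring.
Qed.

Lemma interp_at_0 f : interp x p f 0 = f 0%nat.
Proof. pose proof Hx as [_ [H0 _]]; rewrite <- H0; apply interp_at_mesh; lia. Qed.

Lemma interp_at_1 f : interp x p f 1 = f p.
Proof. pose proof Hx as [_ [_ [H1 _]]]; rewrite <- H1; apply interp_at_mesh; lia. Qed.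

(** Interpolation is a convex combination of data values, hence respects
    lower and upper bounds of the data. *)
Lemma interp_lower_bound f c u : in01 u ->
  (forall i, (i <= p)%nat -> c <= f i) -> c <= interp x p f u.
Proof.
  intros Hu Hf; destruct (cell_spec u Hu) as [Hc _]; pose proof (weight_bounds u Hu).
  assert (c <= f (cell x p u - 1)%nat) by (apply Hf; lia).
  assert (c <= f (cell x p u)) by (apply Hf; lia).
  unfold interp; nra.
Qed.

Lemma interp_upper_bound f c u : in01 u ->
  (forall i, (i <= p)%nat -> f i <= c) -> interp x p f u <= c.
Proof.
  intros Hu Hf; destruct (cell_spec u Hu) as [Hc _]; pose proof (weight_bounds u Hu).
  assert (f (cell x p u - 1)%nat <= c) by (apply Hf; lia).
  assert (f (cell x p u) <= c) by (apply Hf; lia).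
  unfold interp; nra.
Qed.

(** Interpolation of nondecreasing data is nondecreasing: within one cell
    because the weight increases, across cells because the interpolant at u
    is below the data at the right end of its cell, and the interpolant at
    u' above the data at the left end of its cell. *)
Lemma interp_mono f u u' :
  (forall i, (i < p)%nat -> f i <= f (S i)) -> in01 u -> in01 u' -> u <= u' ->
  interp x p f u <= interp x p f u'.
Proof.
  intros Hf Hu Hu' Huu'.
  assert (Hfmono : forall i j, (i <= j)%nat -> (j <= p)%nat -> f i <= f j).
  { intros i j Hij Hj; induction Hij as [|j Hij IH]; [lra|].
    apply Rle_trans with (f j); [apply IH; lia | apply Hf; lia]. }
  pose proof (cell_mono u u' Hu Hu' Huu') as Hcc.
  destruct (cell_spec u Hu) as [Hc _]; destruct (cell_spec u' Hu') as [Hc' _].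
  pose proof (weight_bounds u Hu); pose proof (weight_bounds u' Hu').
  assert (f (cell x p u - 1)%nat <= f (cell x p u)) by (apply Hfmono; lia).
  assert (f (cell x p u' - 1)%nat <= f (cell x p u')) by (apply Hfmono; lia).
  destruct (Nat.eq_dec (cell x p u) (cell x p u')) as [Hsame|Hdiff].
  - assert (weight x p u <= weight x p u').
    { destruct (cell_spec u Hu) as [_ [_ [Hcell _]]]; unfold weight; rewrite <- Hsame.
      apply Rmult_le_compat_r; [left; apply Rinv_0_lt_compat|]; lra. }
    unfold interp; rewrite <- Hsame in *; nra.
  - assert (f (cell x p u) <= f (cell x p u' - 1)%nat) by (apply Hfmono; lia).
    unfold interp; nra.
Qed.

End Partition.

Lemma BL_rows x y p q A u v :
  BL x y p q A u v = interp x p (fun i => interp y q (A i) v) u.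
Proof. unfold BL, interp, weight; cbv zeta; ring. Qed.

Lemma BL_cols x y p q A u v :
  BL x y p q A u v = interp y q (fun j => interp x p (fun i => A i j) u) v.
Proof. unfold BL, interp, weight; cbv zeta; ring. Qed.

Lemma VolR_BL_transpose x y p q A s1 s2 t1 t2 :
  VolR (BL x y p q A) s1 s2 t1 t2 = VolR (BL y x q p (fun j i => A i j)) t1 t2 s1 s2.
Proof. unfold VolR, BL; cbv zeta; ring. Qed.

Lemma VolM_transpose A i1 i2 j1 j2 :
  VolM (fun j i => A i j) j1 j2 i1 i2 = VolM A i1 i2 j1 j2.
Proof. unfold VolM; ring. Qed.

Definition vstep (A : nat -> nat -> R) (j i : nat) : R := A i (S j) - A i j.

Lemma VolM_unit_height A i1 i2 j :
  VolM A i1 i2 j (S j) = vstep A j i2 - vstep A j i1.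
Proof. unfold VolM, vstep; ring. Qed.

Section Bilinear.

Variables (x y : nat -> R) (p q : nat) (A : nat -> nat -> R).
Hypotheses (Hx : is_partition x p) (Hy : is_partition y q).

Lemma BL_at_mesh i j : (i <= p)%nat -> (j <= q)%nat -> BL x y p q A (x i) (y j) = A i j.
Proof.
  intros Hi Hj; rewrite BL_rows, (interp_at_mesh x p Hx _ i Hi).
  apply (interp_at_mesh y q Hy); auto.
Qed.

Lemma VolR_BL_at_mesh i1 i2 j1 j2 :
  (i1 <= p)%nat -> (i2 <= p)%nat -> (j1 <= q)%nat -> (j2 <= q)%nat ->
  VolR (BL x y p q A) (x i1) (x i2) (y j1) (y j2) = VolM A i1 i2 j1 j2.
Proof. intros; unfold VolR, VolM; rewrite !BL_at_mesh by lia; reflexivity. Qed.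

Lemma BL_volume_nonneg s1 s2 t1 t2 :
  in01 t1 -> in01 t2 -> t1 <= t2 ->
  (forall j, (j < q)%nat -> interp x p (vstep A j) s1 <= interp x p (vstep A j) s2) ->
  0 <= VolR (BL x y p q A) s1 s2 t1 t2.
Proof.
  intros Ht1 Ht2 Ht Hsteps.
  set (D := fun j => interp x p (fun i => A i j) s2 - interp x p (fun i => A i j) s1).
  assert (Hvol : VolR (BL x y p q A) s1 s2 t1 t2 = interp y q D t2 - interp y q D t1).
  { unfold VolR, D; rewrite !BL_cols; unfold interp; ring. }
  assert (HD : forall j, (j < q)%nat -> D j <= D (S j)).
  { intros j Hj; specialize (Hsteps j Hj).
    assert (D (S j) - D j = interp x p (vstep A j) s2 - interp x p (vstep A j) s1)
      by (unfold D, vstep, interp; ring).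
    lra. }
  rewrite Hvol; pose proof (interp_mono y q Hy D t1 t2 HD Ht1 Ht2 Ht); lra.
Qed.

Lemma BL_two_increasing : two_increasing_mesh p q A -> two_increasing_sq (BL x y p q A).
Proof.
  intros HA s1 s2 t1 t2 Hs1 Hs Hs2 Ht1 Ht Ht2.
  apply BL_volume_nonneg; try (red; lra); auto.
  intros j Hj; apply (interp_mono x p Hx); try (red; lra); auto.
  intros i Hi; pose proof (HA i (S i) j (S j) ltac:(lia) ltac:(lia) ltac:(lia) ltac:(lia)).
  rewrite VolM_unit_height in *; lra.
Qed.

(** The left side s1 = 0: steps dominate the step at i = 0. *)
Lemma BL_volume_left_edge s2 t1 t2 :
  (forall i j, (i <= p)%nat -> (j < q)%nat -> 0 <= VolM A 0 i j (S j)) ->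
  in01 s2 -> in01 t1 -> in01 t2 -> t1 <= t2 ->
  0 <= VolR (BL x y p q A) 0 s2 t1 t2.
Proof.
  intros HA Hs2 Ht1 Ht2 Ht; apply BL_volume_nonneg; auto.
  intros j Hj; rewrite (interp_at_0 x p Hx); apply (interp_lower_bound x p Hx); auto.
  intros i Hi; pose proof (HA i j Hi Hj); rewrite VolM_unit_height in *; lra.
Qed.

(** The right side s2 = 1: steps are dominated by the step at i = p. *)
Lemma BL_volume_right_edge s1 t1 t2 :
  (forall i j, (i <= p)%nat -> (j < q)%nat -> 0 <= VolM A i p j (S j)) ->
  in01 s1 -> in01 t1 -> in01 t2 -> t1 <= t2 ->
  0 <= VolR (BL x y p q A) s1 1 t1 t2.
Proof.
  intros HA Hs1 Ht1 Ht2 Ht; apply BL_volume_nonneg; auto.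
  intros j Hj; rewrite (interp_at_1 x p Hx); apply (interp_upper_bound x p Hx); auto.
  intros i Hi; pose proof (HA i j Hi Hj); rewrite VolM_unit_height in *; lra.
Qed.

End Bilinear.

Lemma BL_quasi_two_increasing x y p q A : is_partition x p -> is_partition y q ->
  quasi_two_increasing_mesh p q A -> quasi_two_increasing_sq (BL x y p q A).
Proof.
  intros Hx Hy HA s1 s2 t1 t2 Hs1 Hs Hs2 Ht1 Ht Ht2 Hside.
  assert (Hp : (1 <= p)%nat) by apply Hx; assert (Hq : (1 <= q)%nat) by apply Hy.
  destruct Hside as [-> | [-> | [-> | ->]]].
  - apply (BL_volume_left_edge x y p q A Hx Hy); [ | red; lra ..].
    intros i j Hi Hj; apply HA; lia.
  - apply (BL_volume_right_edge x y p q A Hx Hy); [ | red; lra ..].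
    intros i j Hi Hj; apply HA; lia.
  - rewrite VolR_BL_transpose; apply (BL_volume_left_edge y x q p _ Hy Hx); [ | red; lra ..].
    intros j i Hj Hi; rewrite VolM_transpose; apply HA; lia.
  - rewrite VolR_BL_transpose; apply (BL_volume_right_edge y x q p _ Hy Hx); [ | red; lra ..].
    intros j i Hj Hi; rewrite VolM_transpose; apply HA; lia.
Qed.

Lemma two_increasing_iff x y p q A : is_partition x p -> is_partition y q ->
  (two_increasing_mesh p q A <-> two_increasing_sq (BL x y p q A)).
Proof.
  intros Hx Hy; split; [apply BL_two_increasing; auto|].
  intros H i1 i2 j1 j2 Hi Hi2 Hj Hj2.
  rewrite <- (VolR_BL_at_mesh x y p q A Hx Hy) by lia.
  destruct (partition_in01 x p Hx i1 ltac:(lia)), (partition_in01 x p Hx i2 Hi2).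
  destruct (partition_in01 y q Hy j1 ltac:(lia)), (partition_in01 y q Hy j2 Hj2).
  apply H; auto; [apply (partition_le x p Hx) | apply (partition_le y q Hy)]; auto.
Qed.

(** Part (d): quasi-2-increasing transfers both ways; a mesh rectangle has a
    side on the boundary of the square exactly when its index does. *)
Lemma quasi_two_increasing_iff x y p q A : is_partition x p -> is_partition y q ->
  (quasi_two_increasing_mesh p q A <-> quasi_two_increasing_sq (BL x y p q A)).
Proof.
  intros Hx Hy; split; [apply BL_quasi_two_increasing; auto|].
  pose proof Hx as [_ [X0 [X1 _]]]; pose proof Hy as [_ [Y0 [Y1 _]]].
  intros H i1 i2 j1 j2 Hi Hi2 Hj Hj2 Hside.
  rewrite <- (VolR_BL_at_mesh x y p q A Hx Hy) by lia.
  destruct (partition_in01 x p Hx i1 ltac:(lia)), (partition_in01 x p Hx i2 Hi2).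
  destruct (partition_in01 y q Hy j1 ltac:(lia)), (partition_in01 y q Hy j2 Hj2).
  apply H; auto; try (apply (partition_le x p Hx) || apply (partition_le y q Hy); auto).
  destruct Hside as [-> | [-> | [-> | ->]]]; auto.
Qed.

(** Part (a): groundedness; the interpolation of zero boundary data is zero. *)
Lemma grounded_iff x y p q A : is_partition x p -> is_partition y q ->
  (grounded_mesh p q A <-> grounded_sq (BL x y p q A)).
Proof.
  intros Hx Hy; pose proof Hx as [_ [X0 _]]; pose proof Hy as [_ [Y0 _]].
  split.
  - intros [Hrow Hcol] t Ht; split.
    + rewrite BL_cols, (interp_at_0 y q Hy), (interp_ext x p Hx _ (fun _ => 0) t Ht Hrow).
      apply interp_const.
    + rewrite BL_rows, (interp_at_0 x p Hx), (interp_ext y q Hy _ (fun _ => 0) t Ht Hcol).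
      apply interp_const.
  - intros G; split.
    + intros i Hi; rewrite <- (BL_at_mesh x y p q A Hx Hy i 0) by lia; rewrite Y0.
      apply G, (partition_in01 x p Hx), Hi.
    + intros j Hj; rewrite <- (BL_at_mesh x y p q A Hx Hy 0 j) by lia; rewrite X0.
      apply G, (partition_in01 y q Hy), Hj.
Qed.

(** Part (b): neutral element; the interpolation of the nodes is the identity. *)
Lemma neutral_iff x y p q A : is_partition x p -> is_partition y q ->
  (neutral_mesh x y p q A <-> neutral_sq (BL x y p q A)).
Proof.
  intros Hx Hy; pose proof Hx as [_ [_ [X1 _]]]; pose proof Hy as [_ [_ [Y1 _]]].
  split.
  - intros [Htop Hright] t Ht; split.
    + rewrite BL_cols, (interp_at_1 y q Hy), (interp_ext x p Hx _ x t Ht Htop).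
      apply interp_id; auto.
    + rewrite BL_rows, (interp_at_1 x p Hx), (interp_ext y q Hy _ y t Ht Hright).
      apply interp_id; auto.
  - intros G; split.
    + intros i Hi; rewrite <- (BL_at_mesh x y p q A Hx Hy i q) by lia; rewrite Y1.
      apply G, (partition_in01 x p Hx), Hi.
    + intros j Hj; rewrite <- (BL_at_mesh x y p q A Hx Hy p j) by lia; rewrite X1.
      apply G, (partition_in01 y q Hy), Hj.
Qed.

(** Parts (e) and (f) are the conjunctions of (a)-(d). *)
Theorem mainTheorem4 (p q : nat) (x y : nat -> R) (A : nat -> nat -> R) :
  is_partition x p -> is_partition y q ->
  one_increasing_mesh p q A ->
  (grounded_mesh p q A <-> grounded_sq (BL x y p q A)) /\
  (neutral_mesh x y p q A <-> neutral_sq (BL x y p q A)) /\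
  (two_increasing_mesh p q A <-> two_increasing_sq (BL x y p q A)) /\
  (quasi_two_increasing_mesh p q A <-> quasi_two_increasing_sq (BL x y p q A)) /\
  (discrete_copula x y p q A <-> copula (BL x y p q A)) /\
  (discrete_quasi_copula x y p q A <-> quasi_copula (BL x y p q A)).
Proof.
  intros Hx Hy _.
  pose proof (grounded_iff x y p q A Hx Hy).
  pose proof (neutral_iff x y p q A Hx Hy).
  pose proof (two_increasing_iff x y p q A Hx Hy).
  pose proof (quasi_two_increasing_iff x y p q A Hx Hy).
  unfold discrete_copula, copula, discrete_quasi_copula, quasi_copula; tauto.
Qed.
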